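(* A minimal prime graph complement has no vertex of degree $1$.
   Context: All graphs are finite and simple. A graph $G$ is a minimal prime graph complement if $G$ has at least $2$ vertices and: (1) the complement $\overline{G}$ is connected; (2) $G$ is triangle-free; (3) $G$ is $3$-colorable (has a proper vertex coloring with $3$ colors); (4) $G$ is edge-maximal with respect to (2) and (3), i.e. for any two distinct nonadjacent vertices $u,v$ of $G$, the graph obtained by adding the edge $uv$ to $G$ either contains a triangle or is not $3$-colorable. *)

From mathcomp Require Import all_boot.
Set Implicit Arguments. Unset Strict Implicit. Unset Printing Implicit Defensive.

Definition simple_graph (T : finType) (e : rel T) : Prop :=
  symmetric e /\ irreflexive e.

Definition compl_rel (T : finType) (e : rel T) : rel T :=
  [rel x y | (x != y) && ~~ e x y].

Definition connected_graph (T : finType) (e : rel T) : Prop :=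
  forall x y : T, connect e x y.

Definition triangle_free (T : finType) (e : rel T) : Prop :=
  forall x y z : T, ~ (e x y /\ e y z /\ e x z).

Definition proper_coloring (T : finType) (k : nat) (e : rel T) (c : T -> 'I_k) : Prop :=
  forall x y : T, e x y -> c x != c y.

Definition colorable (T : finType) (k : nat) (e : rel T) : Prop :=
  exists c : T -> 'I_k, proper_coloring e c.

Definition add_edge (T : finType) (e : rel T) (u v : T) : rel T :=
  [rel x y | [|| e x y, (x == u) && (y == v) | (x == v) && (y == u)]].

Definition minimal_prime_graph_complement (T : finType) (e : rel T) : Prop :=
  [/\ simple_graph e /\ 1 < #|T|,
      connected_graph (compl_rel e),
      triangle_free e,
      colorable 3 e
    & forall u v : T, u != v -> ~~ e u v ->
        ~ triangle_free (add_edge e u v) \/ ~ colorable 3 (add_edge e u v)].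

Definition degree (T : finType) (e : rel T) (x : T) : nat := #|[set y | e x y]|.

(* A pendant vertex x with unique neighbour y forces y to be adjacent to every
   other vertex z: otherwise the edge xz could be added, since x and z have no
   common neighbour (so no triangle appears) and x, now adjacent only to y and
   z, can be recoloured with a third colour.  But a vertex adjacent to all
   others is isolated in the complement, which is connected only when the
   graph has a single vertex. *)

From mathcomp Require Import all_boot.
Set Implicit Arguments. Unset Strict Implicit. Unset Printing Implicit Defensive.

Section AddEdge.

Variables (T : finType) (e : rel T) (u v : T).

Lemma add_edge_sym : symmetric e -> symmetric (add_edge e u v).
Proof.
move=> sym a b; rewrite /add_edge /= sym.
by case: (a == u) (b == v) (a == v) (b == u) => [] [] [] []; rewrite ?orbT ?orbF.
Qed.

Lemma add_edge_irr : irreflexive e -> u != v -> irreflexive (add_edge e u v).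
Proof.
move=> irr uv a; apply/negP; rewrite /add_edge /= irr /=.
by case/orP=> /andP [/eqP-> /eqP E]; move: uv; rewrite E eqxx.
Qed.

Lemma add_edge_notin_r a b : b != u -> b != v -> add_edge e u v a b = e a b.
Proof. by move=> bu bv; rewrite /add_edge /= (negbTE bu) (negbTE bv) !andbF !orbF. Qed.

Lemma add_edge_off a b : a != u -> b != u -> add_edge e u v a b = e a b.
Proof. by move=> au bu; rewrite /add_edge /= (negbTE au) (negbTE bu) andbF !orbF. Qed.

Lemma add_edge_l b : u != v -> add_edge e u v u b = e u b || (b == v).
Proof. by move=> uv; rewrite /add_edge /= eqxx (negbTE uv) orbF. Qed.

Lemma add_edge_triangle_free :
  symmetric e -> irreflexive e -> u != v -> triangle_free e ->
  (forall w, e u w -> ~~ e v w) -> triangle_free (add_edge e u v).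
Proof.
move=> sym irr uv tri no_common.
set f := add_edge e u v.
have fsym : symmetric f by apply: add_edge_sym.
have firr : irreflexive f by apply: add_edge_irr.
have old a b d : f a b -> f b d -> f a d -> e a b.
  move=> fab fbd fad; apply/negPn/negP => Nab.
  have new_ab : ((a == u) && (b == v)) || ((a == v) && (b == u)).
    by move: fab; rewrite /f /add_edge /= (negbTE Nab).
  have [du dv] : d != u /\ d != v.
    split; apply/eqP => Ed; move: fbd fad; rewrite Ed;
      by case/orP: new_ab => /andP [/eqP-> /eqP->]; rewrite firr // andbF.
  move: fbd fad; rewrite /f !add_edge_notin_r // => ebd ead.
  case/orP: new_ab ebd ead => /andP [/eqP-> /eqP->] => [ evd eud | eud evd ];
    by have := no_common d eud; rewrite evd.
move=> a b d [fab [fbd fad]]; apply: (tri a b d); split; first exact: (old a b d).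
by split; [apply: (old b d a) | apply: (old a d b)]; rewrite // fsym.
Qed.

End AddEdge.

Lemma ord_avoid2 n (a b : 'I_n) : 2 < n -> exists k : 'I_n, (k != a) && (k != b).
Proof.
move=> n_gt2; have: ~~ ([set: 'I_n] \subset [set a; b]).
  apply/negP => /subset_leq_card; rewrite cardsT card_ord cards2.
  by case: (a != b); rewrite leqNgt ?(ltnW n_gt2) ?n_gt2.
by case/subsetPn => k _; rewrite in_set2 negb_or; exists k.
Qed.

Lemma colorable_recolor (T : finType) n (e g : rel T) (x y z : T) :
  2 < n -> symmetric g -> ~~ g x x -> colorable n e ->
  (forall a b, a != x -> b != x -> g a b -> e a b) ->
  (forall w, g x w -> (w == y) || (w == z)) -> colorable n g.
Proof.
move=> n_gt2 gsym Ngxx [c cP] g_off g_x.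
have [k /andP [ky kz]] := ord_avoid2 (c y) (c z) n_gt2.
have recolored w : g x w -> k != c w.
  by move=> gxw; case/orP: (g_x w gxw) => /eqP->.
have Ngx w : g x w -> w != x by move=> gxw; apply: contraTneq gxw => ->.
exists (fun w => if w == x then k else c w) => a b gab.
case: (eqVneq a x) => [Ea|ax].
  by move: gab; rewrite Ea => gxb; rewrite (negbTE (Ngx b gxb)) recolored.
case: (eqVneq b x) => [Eb|bx]; last exact/cP/g_off.
by move: gab; rewrite Eb gsym eq_sym => /recolored.
Qed.

Lemma compl_connected_dominating (T : finType) (e : rel T) (y : T) :
  connected_graph (compl_rel e) -> (forall z, z != y -> e y z) ->
  forall z, z = y.
Proof.
move=> conn dom z; case/connectP: (conn y z) => [[|p0 p] /=]; first by [].
by case/andP=> /andP [p0y Nyp0] _ _; move: Nyp0; rewrite dom // eq_sym.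
Qed.

Theorem lemma3 (T : finType) (e : rel T) :
  minimal_prime_graph_complement e -> forall x : T, degree e x != 1.
Proof.
case=> [[[sym irr] _] conn tri col maximal] x.
apply/negP => /cards1P [y Nx].
have exy z : e x z = (z == y).
  by move/setP: Nx => /(_ z); rewrite !inE.
have xy : x != y by apply: contraFneq (irr x) => E; rewrite exy E.
suff dom z : z != y -> e y z.
  by move: xy; rewrite (compl_connected_dominating conn dom x) eqxx.
move=> zy; case: (eqVneq z x) => [->|zx]; first by rewrite sym exy.
apply/negPn/negP => Nyz.
have xz : x != z by rewrite eq_sym.
have Nxz : ~~ e x z by rewrite exy.
case: (maximal x z xz Nxz); apply.
- apply: add_edge_triangle_free => // w; rewrite exy => /eqP->.
  by rewrite sym.
- apply: (colorable_recolor (x := x) (y := y) (z := z) _ (add_edge_sym _ _ sym)) col _ _ => //.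
  + by rewrite (add_edge_irr irr xz).
  + by move=> a b ax bx; rewrite add_edge_off.
  + by move=> w; rewrite add_edge_l // exy.
Qed.
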